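(* Let $L:\mathbb{R}^k\to\mathbb{R}^m$ be a minimal linear map such that $|S(L_i)|>1$ for all $i\in[m]$, $|S(L)|=k\geq 8$, and $t(L)>2^{k-1}$. Then the shape of $L$ is either a (2,1)-star or a (3,2)-star.
   Context: Let $\mathbb{H}^n=\{0,1\}^n$, and $e_1,\dots,e_k$ the standard basis of $\mathbb{R}^k$. For a linear map $L:\mathbb{R}^k\to\mathbb{R}^m$, set $I(L)=L^{-1}(\mathbb{H}^m)\cap\mathbb{H}^k$ and $t(L)=|I(L)|$. The support is $S(L)=\{i\in[k]: L(e_i)\neq 0\}$. For $i\in[m]$, $L_i=\pi_i\circ L:\mathbb{R}^k\to\mathbb{R}$ is the $i$-th coordinate of $L$. $L$ is called minimal if for every $i\in[m]$ we have $S(L_i)\not\subseteq\bigcup_{j\neq i}S(L_j)$ and $t(L_i)<2^k$. The shape of $L$ is the hypergraph with vertex set $\{1,\dots,k\}$ and edge set $\{S(L_i): i\in[m]\}$. A (2,1)-star is a 2-uniform hypergraph $(V,E)$ with a vertex $c\in V$ such that $E=\{\{c,v\}: v\in V\setminus\{c\}\}$. A (3,2)-star is a 3-uniform hypergraph $(V,E)$ with distinct $c_1,c_2\in V$ such that $E=\{\{c_1,c_2,v\}: v\in V\setminus\{c_1,c_2\}\}$. *)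

From HB Require Import structures.
From mathcomp Require Import all_boot all_order all_algebra.
From mathcomp Require Import reals.
Set Implicit Arguments. Unset Strict Implicit. Unset Printing Implicit Defensive.
Import Order.TTheory GRing.Theory Num.Theory.
Local Open Scope ring_scope.

(* A linear map L : R^k -> R^m is represented by its matrix A : 'M_(m,k),
   acting on column vectors: L x = A *m x. *)

(* The 0/1 column vector associated to b : {ffun 'I_k -> bool}; these are exactly
   the points of the hypercube H^k = {0,1}^k. *)
Definition hvec (R : realType) (k : nat) (b : {ffun 'I_k -> bool}) : 'cV[R]_k :=
  \col_j (b j)%:R.

Definition in_cube (R : realType) (m : nat) (y : 'cV[R]_m) : bool :=
  [forall i : 'I_m, (y i 0 == 0) || (y i 0 == 1)].

(* t(L) = |L^{-1}(H^m) ∩ H^k| *)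
Definition tL (R : realType) (m k : nat) (A : 'M[R]_(m, k)) : nat :=
  #|[set b : {ffun 'I_k -> bool} | in_cube (A *m hvec R b)]|.

Definition suppL (R : realType) (m k : nat) (A : 'M[R]_(m, k)) : {set 'I_k} :=
  [set j | col j A != 0].

(* L_i = pi_i o L, a map R^k -> R, represented by the 1 x k matrix row i A *)
Definition coordL (R : realType) (m k : nat) (A : 'M[R]_(m, k)) (i : 'I_m)
  : 'M[R]_(1, k) := row i A.

Definition minimal (R : realType) (m k : nat) (A : 'M[R]_(m, k)) : Prop :=
  forall i : 'I_m,
    ~~ (suppL (coordL A i) \subset \bigcup_(j | j != i) suppL (coordL A j))
    /\ (tL (coordL A i) < 2 ^ k)%N.

(* shape: edge set {S(L_i) : i in [m]} on the vertex set 'I_k *)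
Definition shapeL (R : realType) (m k : nat) (A : 'M[R]_(m, k)) : {set {set 'I_k}} :=
  [set suppL (coordL A i) | i : 'I_m].

Definition star21 (T : finType) (E : {set {set T}}) : Prop :=
  (forall e, e \in E -> #|e| = 2%N) /\
  exists c : T, E = [set [set c; v] | v in ~: [set c]].

Definition star32 (T : finType) (E : {set {set T}}) : Prop :=
  (forall e, e \in E -> #|e| = 3%N) /\
  exists c1 c2 : T, c1 != c2 /\
    E = [set [set c1; c2; v] | v in ~: [set c1; c2]].

(* The matrix of L has entries in {0, 1, -1}: since more than half of the cube is good, every
   column j admits a good point whose flip in coordinate j is good too. Minimality gives every
   row i a private column p i. Summing over the private bits, 2^m t(L) = sum_x prod_i h_i(x),
   where h_i(x) in {0, 1, 2} counts the values of x_(p i) that make row i good and depends only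
   on the free (non-private) coordinates. So t(L) <= 2^(k-1) as soon as some rows and free
   columns form a configuration in which, on every subcube spanned by those columns, the
   product of the corresponding h_i averages at most half its maximum. A handful of small
   configurations are certified this way by exhaustive computation, and a case analysis shows
   that one of them occurs unless every row is nonzero exactly on its private column and on a
   common set C of one or two free columns, i.e. the shape is a star with centre C. *)

From HB Require Import structures.
From mathcomp Require Import all_boot all_order all_algebra.
From mathcomp Require Import reals.
From mathcomp Require Import zify ring lra.
Set Implicit Arguments. Unset Strict Implicit. Unset Printing Implicit Defensive.
Import Order.TTheory GRing.Theory Num.Theory.
Local Open Scope ring_scope.

(** * Certified bounds on cube sums *)

Definition is01 (y : int) : bool := (y == 0) || (y == 1).

(* Written as a match so that [vm_compute] evaluates it fast; [hitsE] gives its meaning. *)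
Definition hits (y : int) : nat :=
  match y with Posz 0 => 2 | Posz 1 | Negz 0 => 1 | _ => 0 end.

Lemma hitsE y : hits y = (is01 y + is01 (y + 1))%N.
Proof. by case: y => [[|[|n]]|[|n]] //; rewrite /is01; lia. Qed.

Lemma hits_le2 y : (hits y <= 2)%N.
Proof. rewrite !hitsE /is01; lia. Qed.

Lemma hits_le1 y : y != 0 -> (hits y <= 1)%N.
Proof. rewrite !hitsE /is01; lia. Qed.

Lemma hits_eq0 y : (1 < `|y|)%N -> hits y = 0%N.
Proof. rewrite !hitsE /is01; lia. Qed.

Lemma hitsN y : hits (- y) = hits y.
Proof. rewrite !hitsE /is01; lia. Qed.

Fixpoint addcol (cs d : seq int) : seq int :=
  if (cs, d) is (c :: cs', x :: d') then c + x :: addcol cs' d' else cs.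

Definition hits_prod (cs : seq int) : nat := foldr (fun c n => hits c * n)%N 1%N cs.

Fixpoint cube_sum (e : nat) (D : seq (seq int)) (cs : seq int) : nat :=
  if D is d :: D' then (cube_sum e D' cs + cube_sum e D' (addcol cs d))%N
  else (hits_prod cs ^ e)%N.

Fixpoint product (T : Type) (ss : seq (seq T)) : seq (seq T) :=
  if ss is s :: ss' then [seq x :: t | x <- s, t <- product ss'] else [:: [::]].

Definition window (n : nat) : seq int := [seq i%:Z - n.+1%:Z | i <- iota 0 (n.*2).+3].

Definition unit_bounded (d : seq int) : bool := all (fun x => `|x| <= 1)%N d.

Definition within (n : nat) (cs : seq int) : bool := all (fun c => `|c| <= n.+1)%N cs.

(* [cube_sum e D cs] sums (prod_r hits (cs_r + sum_j D_j,r y_j)) ^ e over all 0/1 vectors y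
   indexed by the columns of D. [cube_check] bounds it by B for every D satisfying cond whose
   (j, r) entry lies in P_j,r, and every offset vector cs in the window; offsets outside the
   window contribute nothing ([cube_sum_out]). *)
Definition cube_check (e q : nat) (P : seq (seq (seq int))) (cond : pred (seq (seq int)))
    (B : nat) : bool :=
  all (fun D => cond D ==>
         all (fun cs => cube_sum e D cs <= B)%N (product (nseq q (window (size P)))))
    (product (map (@product _) P)).

Lemma mem_product (T : eqType) (ss : seq (seq T)) xs :
  all2 (fun x s => x \in s) xs ss -> xs \in product ss.
Proof.
elim: ss xs => [|s ss IH] [|x xs] //= /andP[xs_in /IH xss_in].
exact: (allpairs_f (fun x t => x :: t)).
Qed.

Lemma mem_window n c : (`|c| <= n.+1)%N -> c \in window n.
Proof.
move=> c_le; apply/mapP; exists (absz (c + n.+1%:Z)); first by rewrite mem_iota; lia.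
lia.
Qed.

Lemma withinS n cs : within n cs -> within n.+1 cs.
Proof. by apply: sub_all => c /leqW. Qed.

Lemma addcol_out n cs d :
  unit_bounded d -> ~~ within n.+1 cs -> ~~ within n (addcol cs d).
Proof.
elim: cs d => [|c cs IH] [|x d] //.
  by move=> _; apply: contra; apply: withinS.
rewrite /unit_bounded /within /=.
move=> /andP[x_le d_le]; rewrite !negb_and -!ltnNge => /orP[c_gt|cs_out].
  by apply/orP; left; lia.
by apply/orP; right; exact: IH.
Qed.

Lemma cube_sum_out e D cs : (0 < e)%N -> all unit_bounded D ->
  ~~ within (size D) cs -> cube_sum e D cs = 0%N.
Proof.
move=> e_gt0; elim: D cs => [|d D IH] cs /=.
  move=> _ /allPn[c c_in c_gt]; rewrite -ltnNge in c_gt.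
  suff -> : hits_prod cs = 0%N by rewrite exp0n.
  elim: cs c_in => [|c' cs IHcs] //=.
  by rewrite inE => /orP[/eqP<-|/IHcs->]; [rewrite hits_eq0 | rewrite muln0].
move=> /andP[d_bd D_bd] cs_out.
rewrite !IH ?addcol_out //.
by move: cs_out; apply: contra; apply: withinS.
Qed.

Lemma cube_check_sound e q P cond B D cs : cube_check e q P cond B -> (0 < e)%N ->
  all2 (all2 (fun x s => x \in s)) D P -> all unit_bounded D -> cond D ->
  size cs = q -> (cube_sum e D cs <= B)%N.
Proof.
move=> chk e_gt0 DP D_bd D_cond cs_q.
have sizeD : size D = size P by move: DP; rewrite all2E => /andP[/eqP].
case: (boolP (within (size D) cs)) => [cs_in|cs_out]; last by rewrite cube_sum_out.
have D_in : D \in product (map (@product _) P).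
  apply: mem_product; clear -DP; elim: D P DP => [|d D IH] [|p P] //=.
  by case/andP=> dp /IH->; rewrite mem_product.
move/allP: chk => /(_ D D_in); rewrite D_cond => /allP; apply; apply: mem_product.
rewrite -cs_q -sizeD; elim: cs cs_in {cs_q} => [|c cs IH] //= /andP[c_le /IH->].
by rewrite mem_window.
Qed.

Definition nonzero : seq int := [:: -1; 1].
Definition zero : seq int := [:: 0].
Definition unit_range : seq int := [:: -1; 0; 1].

Definition twisted (D : seq (seq int)) : bool :=
  if D is [:: [:: x1; y1]; [:: x2; y2]] then (x1 == x2) != (y1 == y2) else false.

(* Each certificate bounds the cube sum by half of its trivial maximum
   2 ^ (#columns + e * #rows). *)
Lemma cert_diag3 :
  cube_check 1 3 [:: [:: nonzero; zero; zero]; [:: zero; nonzero; zero]; [:: zero; zero; nonzero]]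
    predT 32.
Proof. by vm_compute. Qed.

Lemma cert_overlap3 :
  cube_check 1 3 [:: [:: nonzero; nonzero; unit_range]; [:: zero; nonzero; nonzero]] predT 16.
Proof. by vm_compute. Qed.

Lemma cert_overlap4 :
  cube_check 1 4 [:: [:: nonzero; unit_range; unit_range; nonzero];
                [:: zero; nonzero; nonzero; unit_range]] predT 32.
Proof. by vm_compute. Qed.

Lemma cert_lonely_apart :
  cube_check 1 3 [:: [:: nonzero; zero; zero]; [:: zero; nonzero; nonzero]] predT 16.
Proof. by vm_compute. Qed.

Lemma cert_lonely_inside :
  cube_check 1 3 [:: [:: nonzero; zero; zero]; [:: nonzero; nonzero; nonzero]] predT 16.
Proof. by vm_compute. Qed.

Lemma cert_two_rows_wide :
  cube_check 1 2 [:: [:: nonzero; zero]; [:: unit_range; nonzero]; [:: unit_range; nonzero];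
                [:: unit_range; nonzero]] predT 32.
Proof. by vm_compute. Qed.

Lemma cert_two_rows_narrow :
  cube_check 1 2 [:: [:: nonzero; zero]; [:: nonzero; zero]; [:: nonzero; zero]; [:: nonzero; zero];
                [:: unit_range; nonzero]] predT 64.
Proof. by vm_compute. Qed.

Lemma cert_twisted : cube_check 1 2 [:: [:: nonzero; nonzero]; [:: nonzero; nonzero]] twisted 8.
Proof. by vm_compute. Qed.

Lemma cert_parallel1 : cube_check 1 1 (nseq 7 [:: nonzero]) predT 128.
Proof. by vm_compute. Qed.

Lemma cert_parallel2 : cube_check 2 1 (nseq 6 [:: nonzero]) predT 128.
Proof. by vm_compute. Qed.

Lemma cert_parallel3 : cube_check 3 1 (nseq 3 [:: nonzero]) predT 32.
Proof. by vm_compute. Qed.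

Section SubcubeSums.
Variable k : nat.
Local Notation cube := {ffun 'I_k -> bool}.

Definition flip (j : 'I_k) (x : cube) : cube := [ffun v => (v == j) (+) x v].

Lemma flip_id j x : flip j x j = ~~ x j.
Proof. by rewrite ffunE eqxx. Qed.

Lemma flip_neq j l x : l != j -> flip j x l = x l.
Proof. by rewrite ffunE => /negbTE->. Qed.

Lemma flipK j : involutive (flip j).
Proof. by move=> x; apply/ffunP=> v; rewrite !ffunE addKb. Qed.

Lemma flipC j l x : flip j (flip l x) = flip l (flip j x).
Proof. by apply/ffunP=> v; rewrite !ffunE addbCA. Qed.

Lemma sum_flip j (g : cube -> nat) : (\sum_x g (flip j x) = \sum_x g x)%N.
Proof. by rewrite [RHS](reindex_inj (inv_inj (flipK j))). Qed.

Fixpoint subcube_sum (J : seq 'I_k) (g : cube -> nat) (x : cube) : nat :=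
  if J is j :: J' then (subcube_sum J' g x + subcube_sum J' g (flip j x))%N else g x.

Lemma sum_subcube_sum J g : (\sum_x subcube_sum J g x = 2 ^ size J * \sum_x g x)%N.
Proof.
elim: J => [|j J IH] /=; first by rewrite mul1n.
rewrite big_split /= (sum_flip j (subcube_sum J g)) IH.
by rewrite addnn -mul2n expnS mulnA.
Qed.

Lemma subcube_sum_le J (g g' : cube -> nat) x :
  (forall y, g y <= g' y)%N -> (subcube_sum J g x <= subcube_sum J g' x)%N.
Proof. by move=> le_gg'; elim: J x => [|j J IH] x /=; rewrite ?leq_add. Qed.

Lemma subcube_sumZ J c (g : cube -> nat) x :
  subcube_sum J (fun y => c * g y)%N x = (c * subcube_sum J g x)%N.
Proof. by elim: J x => [|j J IH] x //=; rewrite !IH mulnDr. Qed.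

End SubcubeSums.

Section CenteredShape.
Variables (T I : finType) (p : I -> T).
Let C := ~: [set p i | i : I].

Lemma private_image : [set p i |: C | i : I] = [set v |: C | v in ~: C].
Proof. by rewrite setCK -imset_comp. Qed.

Lemma star21_center : #|C| = 1%N -> star21 [set p i |: C | i : I].
Proof.
move/eqP/cards1P => -[c Cc]; rewrite private_image Cc; split.
  by move=> e /imsetP[v]; rewrite !inE => vc ->; rewrite cardsU1 cards1 inE vc.
by exists c; apply: eq_imset => v; rewrite setUC.
Qed.

Lemma star32_center : #|C| = 2%N -> star32 [set p i |: C | i : I].
Proof.
move/eqP/cards2P => -[c1 [c2 [c12 Cc]]]; rewrite private_image Cc; split.
  move=> e /imsetP[v]; rewrite !inE negb_or => vc ->.
  by rewrite cardsU1 cards2 c12 !inE negb_or vc.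
exists c1, c2; split => //; apply: eq_imset => v.
by apply/setP => x; rewrite !inE; case: (x == v); case: (x == c1); case: (x == c2).
Qed.

End CenteredShape.

(** * Integer matrices with private columns *)

Section PrivateColumns.
Variables (m k : nat) (a : 'I_m -> 'I_k -> int).
Local Notation cube := {ffun 'I_k -> bool}.

Definition row_val i (x : cube) : int := \sum_j a i j * (x j)%:R.

Definition good i x : bool := is01 (row_val i x).

Definition good_set : {set cube} := [set x | [forall i, good i x]].

Definition flip_delta i j (x : cube) : int := a i j * ((~~ x j)%:R - (x j)%:R).

Lemma row_val_flip i j x : row_val i (flip j x) = row_val i x + flip_delta i j x.
Proof.
rewrite /row_val /flip_delta (bigD1 j) //= [in RHS](bigD1 j) //= flip_id.
rewrite (eq_bigr (fun v => a i v * (x v)%:R)) => [|v /flip_neq->//].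
by rewrite mulrBr; ring.
Qed.

Lemma flip_delta_flip i j l x : l != j -> flip_delta i j (flip l x) = flip_delta i j x.
Proof. by move=> lj; rewrite /flip_delta flip_neq // eq_sym. Qed.

Lemma card_good_set : #|good_set| = (\sum_x \prod_i (good i x : nat))%N.
Proof.
rewrite -sum1_card big_mkcond /=; apply: eq_bigr => x _; rewrite inE.
case: (boolP [forall i, good i x]) => [/forallP all_good | /forallPn[i /negbTE bad]].
  by rewrite big1 // => i _; rewrite all_good.
by rewrite (bigD1 i) //= bad mul0n.
Qed.

Hypothesis a_unit : forall i j, (`|a i j| <= 1)%N.

Variable p : 'I_m -> 'I_k.
Hypothesis a_priv : forall i i', i' != i -> a i' (p i) = 0.
Hypothesis a_priv_nz : forall i, a i (p i) != 0.

Lemma priv_unit i : (a i (p i) == 1) || (a i (p i) == -1).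
Proof. by have := a_unit i (p i); have := a_priv_nz i; lia. Qed.

Definition free_cols : {set 'I_k} := ~: [set p i | i : 'I_m].

Lemma free_colsP j : reflect (forall i, p i != j) (j \in free_cols).
Proof.
rewrite inE; apply: (iffP idP) => [nfree i | nfree].
  by apply: contraNneq nfree => <-; apply: imset_f.
by apply/imsetP=> -[i _ ji]; move: (nfree i); rewrite ji eqxx.
Qed.

Lemma priv_not_free i : p i \notin free_cols.
Proof. by apply/free_colsP => /(_ i); rewrite eqxx. Qed.

Lemma p_inj : injective p.
Proof.
move=> i i' pii'; apply/eqP; apply: contraT => ii'.
by move: (priv_unit i); rewrite pii' a_priv // eq_sym.
Qed.

Lemma card_free_cols : #|free_cols| = (k - m)%N.
Proof. by rewrite cardsCs setCK card_imset ?card_ord //; exact: p_inj. Qed.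

(* [hits (residual i x)] counts the values of the private bit [x (p i)] for which row [i] is
   good ([hits_residual]); the residual itself does not depend on that bit. *)
Definition residual i x : int :=
  row_val i x - a i (p i) * (x (p i))%:R - (a i (p i) == -1)%:R.

Definition weight x : nat := (\prod_i hits (residual i x))%N.

Lemma good_flip_priv i i' x : i' != i -> good i' (flip (p i) x) = good i' x.
Proof. by move=> i'i; rewrite /good row_val_flip /flip_delta a_priv // mul0r addr0. Qed.

Lemma hits_residual i x : hits (residual i x) = (good i x + good i (flip (p i) x))%N.
Proof.
rewrite /good row_val_flip /flip_delta /residual hitsE.
by case/orP: (priv_unit i) => /eqP->; case: (x (p i)) => /=; rewrite /is01; lia.
Qed.

Lemma hits_residual_flip i r x : i != r -> hits (residual i (flip (p r) x)) = hits (residual i x).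
Proof. by move=> ir; rewrite !hits_residual flipC !(good_flip_priv _ ir). Qed.

Lemma subcube_sum_priv rs x : uniq rs ->
  subcube_sum [seq p i | i <- rs] (fun y => \prod_i (good i y : nat))%N x =
  (\prod_(i <- rs) hits (residual i x) * \prod_(i | i \notin rs) (good i x : nat))%N.
Proof.
elim: rs x => [|r rs IH] x /=.
  by move=> _; rewrite big_nil mul1n; apply: eq_bigl => i.
case/andP=> r_notin rs_uniq; rewrite !IH //.
have split_r y : (\prod_(i | i \notin rs) (good i y : nat) =
    good r y * \prod_(i | i \notin r :: rs) (good i y : nat))%N.
  rewrite (bigD1 r) //=; congr (_ * _)%N; apply: eq_bigl => i.
  by rewrite in_cons negb_or andbC.
have flip_rs : (\prod_(i <- rs) hits (residual i (flip (p r) x)) =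
    \prod_(i <- rs) hits (residual i x))%N.
  rewrite big_seq_cond [RHS]big_seq_cond; apply: eq_bigr => i /andP[i_in _].
  by apply: hits_residual_flip; apply: contraNneq r_notin => <-.
have flip_rest : (\prod_(i | i \notin r :: rs) (good i (flip (p r) x) : nat) =
    \prod_(i | i \notin r :: rs) (good i x : nat))%N.
  apply: eq_bigr => i; rewrite in_cons negb_or => /andP[ir _].
  by rewrite good_flip_priv.
rewrite !split_r big_cons hits_residual flip_rs flip_rest; ring.
Qed.

Lemma sum_weight : (\sum_x weight x = 2 ^ m * #|good_set|)%N.
Proof.
rewrite card_good_set -{1}(size_enum_ord m) -(size_map p) -sum_subcube_sum.
apply: eq_bigr => x _; rewrite subcube_sum_priv ?enum_uniq //.
rewrite [X in (_ * X)%N]big_pred0 => [|i]; last by rewrite mem_enum.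
by rewrite muln1 /weight big_enum.
Qed.

Lemma residual_flip i j x : j \in free_cols ->
  residual i (flip j x) = residual i x + flip_delta i j x.
Proof.
move=> /free_colsP/(_ i) pj.
by rewrite /residual row_val_flip flip_neq //; ring.
Qed.

Definition residuals rs x : seq int := [seq residual r x | r <- rs].

Definition deltas J rs x : seq (seq int) := [seq [seq flip_delta r j x | r <- rs] | j <- J].

Lemma addcol_residuals rs j x : j \in free_cols ->
  addcol (residuals rs x) [seq flip_delta r j x | r <- rs] = residuals rs (flip j x).
Proof. by move=> j_free; elim: rs => //= r rs ->; rewrite residual_flip. Qed.

Lemma subcube_sum_cube_sum e J rs x : uniq J -> {subset J <= free_cols} ->
  subcube_sum J (fun y => hits_prod (residuals rs y) ^ e)%N x =
  cube_sum e (deltas J rs x) (residuals rs x).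
Proof.
elim: J x => [|j J IH] x //= /andP[j_notin J_uniq] J_free.
have j_free : j \in free_cols by apply: J_free; exact: mem_head.
have J'_free : {subset J <= free_cols} by move=> l l_in; apply: J_free; rewrite inE l_in orbT.
rewrite !IH // addcol_residuals //; congr (_ + cube_sum _ _ _)%N.
apply/eq_in_map => l l_in; apply/eq_map => r; apply: flip_delta_flip.
by apply: contraNneq j_notin => ->.
Qed.

Lemma card_cube : #|{: cube}| = (2 ^ k)%N.
Proof. by rewrite card_ffun card_bool card_ord. Qed.

Lemma sparse_of_local_bound e J rs q : uniq J -> {subset J <= free_cols} -> (q <= m)%N ->
  (forall y, weight y <= 2 ^ (m - q) * hits_prod (residuals rs y) ^ e)%N ->
  (forall x, 2 * cube_sum e (deltas J rs x) (residuals rs x) <= 2 ^ (size J + q))%N ->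
  (2 * #|good_set| <= 2 ^ k)%N.
Proof.
move=> J_uniq J_free q_le weight_le local_le.
have subcube_le x : (2 * subcube_sum J weight x <= 2 ^ (size J + m))%N.
  rewrite -(subnK q_le) addnCA expnD.
  apply: (@leq_trans (2 ^ (m - q) * (2 * cube_sum e (deltas J rs x) (residuals rs x))));
    last by rewrite leq_mul2l local_le orbT.
  rewrite mulnCA leq_mul2l /= -subcube_sum_cube_sum // -subcube_sumZ.
  exact: subcube_sum_le.
have : (\sum_x 2 * subcube_sum J weight x <= \sum_(x : cube) 2 ^ (size J + m))%N.
  by apply: leq_sum => x _; exact: subcube_le.
rewrite -big_distrr /= sum_subcube_sum sum_weight sum_nat_const card_cube.
rewrite mulnCA [X in (_ <= X)%N]mulnC expnD -mulnA leq_pmul2l ?expn_gt0 //.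
by rewrite mulnCA leq_pmul2l ?expn_gt0.
Qed.

Lemma hits_prod_residuals rs y :
  hits_prod (residuals rs y) = (\prod_(r <- rs) hits (residual r y))%N.
Proof. by elim: rs => [|r rs IH]; rewrite ?big_nil ?big_cons //= IH. Qed.

Lemma uniq_size_le (rs : seq 'I_m) : uniq rs -> (size rs <= m)%N.
Proof.
by move=> rs_uniq; rewrite -(card_uniqP rs_uniq) -[X in (_ <= X)%N]card_ord max_card.
Qed.

Lemma weight_le_prod rs y : uniq rs ->
  (weight y <= 2 ^ (m - size rs) * hits_prod (residuals rs y) ^ 1)%N.
Proof.
move=> rs_uniq; rewrite expn1 hits_prod_residuals /weight (bigID (mem rs)) /=.
rewrite -big_uniq // mulnC leq_mul2r; apply/orP; right.
apply: (@leq_trans (\prod_(i | i \notin rs) 2)); first by apply: leq_prod => i _; exact: hits_le2.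
have := cardC (mem rs); rewrite card_ord (card_uniqP rs_uniq) => card_rs.
rewrite prod_nat_const leq_exp2l //; apply: eq_leq; apply/eqP.
rewrite -(eqn_add2l (size rs)) subnKC ?uniq_size_le // -[X in _ == X]card_rs.
by apply/eqP; congr (_ + _)%N; apply: eq_card.
Qed.

Lemma weight_le_pow r0 q y : (q <= m)%N -> (forall i, hits (residual i y) = hits (residual r0 y)) ->
  (weight y <= 2 ^ (m - q) * hits_prod (residuals [:: r0] y) ^ q)%N.
Proof.
move=> q_le same_hits; rewrite /weight (eq_bigr _ (fun i _ => same_hits i)) prod_nat_const.
rewrite card_ord /= muln1 -{1}(subnK q_le) expnD leq_mul2r; apply/orP; right.
by elim: (m - q)%N => // n IH; rewrite !expnS leq_mul // hits_le2.
Qed.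

Lemma flip_delta_any r j x : flip_delta r j x \in unit_range.
Proof. by have := a_unit r j; rewrite /flip_delta; case: (x j) => /=; rewrite !inE; lia. Qed.

Lemma flip_delta_nonzero r j x : a r j != 0 -> flip_delta r j x \in nonzero.
Proof. by have := a_unit r j; rewrite /flip_delta; case: (x j) => /=; rewrite !inE; lia. Qed.

Lemma flip_delta_zero r j x : a r j = 0 -> flip_delta r j x \in zero.
Proof. by rewrite /flip_delta => ->; rewrite mul0r inE. Qed.

Lemma deltas_unit J rs x : all unit_bounded (deltas J rs x).
Proof.
apply/allP=> d /mapP[j _ ->]; apply/allP=> y /mapP[r _ ->].
by move: (flip_delta_any r j x); rewrite !inE; lia.
Qed.

Lemma sparse_of_check J rs P cond B : uniq J -> {subset J <= free_cols} -> uniq rs ->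
  cube_check 1 (size rs) P cond B -> (2 * B <= 2 ^ (size J + size rs))%N ->
  (forall x, all2 (all2 (fun d s => d \in s)) (deltas J rs x) P && cond (deltas J rs x)) ->
  (2 * #|good_set| <= 2 ^ k)%N.
Proof.
move=> J_uniq J_free rs_uniq chk B_le matches.
apply: (sparse_of_local_bound J_uniq J_free (uniq_size_le rs_uniq)
  (fun y => weight_le_prod y rs_uniq)).
move=> x; apply: leq_trans B_le; rewrite leq_mul2l /=.
have /andP[DP Dcond] := matches x.
by apply: cube_check_sound chk _ DP (deltas_unit _ _ _) Dcond _; rewrite ?size_map.
Qed.

Lemma sparse_of_check_parallel J r0 q P B : uniq J -> {subset J <= free_cols} ->
  (0 < q <= m)%N -> (forall i y, hits (residual i y) = hits (residual r0 y)) ->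
  cube_check q 1 P predT B -> (2 * B <= 2 ^ (size J + q))%N ->
  (forall x, all2 (all2 (fun d s => d \in s)) (deltas J [:: r0] x) P) ->
  (2 * #|good_set| <= 2 ^ k)%N.
Proof.
move=> J_uniq J_free /andP[q_gt0 q_le] same_hits chk B_le matches.
apply: (sparse_of_local_bound J_uniq J_free q_le (fun y => weight_le_pow q_le (same_hits ^~ y))).
move=> x; apply: leq_trans B_le; rewrite leq_mul2l /=.
exact: cube_check_sound chk q_gt0 (matches x) (deltas_unit _ _ _) _ _.
Qed.

(** * The case analysis *)

Hypothesis col_cover : forall j, exists i, a i j != 0.
Hypothesis row_supp_gt1 : forall i, (1 < #|[set j | a i j != 0]|)%N.
Hypothesis k_ge8 : (8 <= k)%N.
Hypothesis dense : (2 ^ k < 2 * #|good_set|)%N.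

Lemma row_free i : exists2 v, v \in free_cols & a i v != 0.
Proof.
case/card_gt1P: (row_supp_gt1 i) => j1 [j2 [j1_in j2_in j12]].
have [v [v_in vpi]] : exists v, v \in [set j | a i j != 0] /\ v != p i.
  case: (eqVneq j1 (p i)) => [j1p|]; last by exists j1.
  by exists j2; split; rewrite // -j1p eq_sym.
exists v; last by rewrite inE in v_in.
apply/free_colsP => i'; apply/eqP => pv; move: v_in; rewrite inE -pv a_priv ?eqxx //.
by apply: contra_neq vpi => ->; rewrite pv.
Qed.

Lemma not_sparse : ~ (2 * #|good_set| <= 2 ^ k)%N.
Proof. by rewrite leqNgt dense. Qed.

Ltac match_pattern :=
  move=> x; rewrite /= ?andbT;
  repeat first [ exact: flip_delta_any
               | apply: flip_delta_nonzero; assumption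
               | apply: flip_delta_zero; assumption
               | apply/andP; split ].

Lemma no_overlap3 v l ra rb rc : v != l -> v \in free_cols -> l \in free_cols ->
  uniq [:: ra; rb; rc] -> a ra v != 0 -> a ra l = 0 -> a rb v != 0 -> a rb l != 0 ->
  a rc l != 0 -> False.
Proof.
move=> vl v_free l_free rs_uniq *; apply: not_sparse.
apply: (sparse_of_check (J := [:: v; l]) _ _ rs_uniq cert_overlap3).
- by rewrite /= inE vl.
- by apply/allP; rewrite /= v_free l_free.
- by [].
- match_pattern.
Qed.

Lemma no_overlap4 v l ra rb rc rd : v != l -> v \in free_cols -> l \in free_cols ->
  uniq [:: ra; rb; rc; rd] -> a ra v != 0 -> a ra l = 0 -> a rb l != 0 -> a rc l != 0 ->
  a rd v != 0 -> False.
Proof.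
move=> vl v_free l_free rs_uniq *; apply: not_sparse.
apply: (sparse_of_check (J := [:: v; l]) _ _ rs_uniq cert_overlap4).
- by rewrite /= inE vl.
- by apply/allP; rewrite /= v_free l_free.
- by [].
- match_pattern.
Qed.

Definition col_supp v : {set 'I_m} := [set r | a r v != 0].

Lemma col_supp_sub v l : v \in free_cols -> l \in free_cols ->
  (1 < #|col_supp v|)%N -> (1 < #|col_supp l|)%N -> col_supp v \subset col_supp l.
Proof.
move=> v_free l_free /card_gt1P[d0 [d1 [d0v d1v d01]]] /card_gt1P[b [c [bl cl bc]]].
apply/subsetP => r0 r0v; apply/negPn/negP => r0l; rewrite !inE in r0v r0l d0v d1v bl cl.
have vl : v != l by apply: contraNneq r0l => <-.
have r0b : r0 != b by apply: contraNneq r0l => ->.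
have r0c : r0 != c by apply: contraNneq r0l => ->.
have [d [dv dr0]] : exists d, a d v != 0 /\ d != r0.
  case: (eqVneq d0 r0) => [<-|d0r0]; last by exists d0.
  by exists d1; split; rewrite // eq_sym.
move/negPn/eqP: r0l => r0l.
have [db|d_b] := eqVneq d b.
  rewrite db in dv; apply: (no_overlap3 vl v_free l_free _ r0v r0l dv bl cl).
  by rewrite /= !inE negb_or r0b r0c bc.
have [dc|d_c] := eqVneq d c.
  rewrite dc in dv; apply: (no_overlap3 vl v_free l_free _ r0v r0l dv cl bl).
  by rewrite /= !inE negb_or r0b r0c eq_sym bc.
apply: (no_overlap4 vl v_free l_free _ r0v r0l bl cl dv).
by rewrite /= !inE !negb_or r0b r0c (eq_sym r0) dr0 bc (eq_sym b) d_b (eq_sym c) d_c.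
Qed.

Lemma col_supp_eq v l : v \in free_cols -> l \in free_cols ->
  (1 < #|col_supp v|)%N -> (1 < #|col_supp l|)%N -> col_supp v = col_supp l.
Proof. by move=> *; apply/eqP; rewrite eqEsubset !col_supp_sub. Qed.

Lemma col_supp1_zero v i r : col_supp v = [set i] -> r != i -> a r v = 0.
Proof. by move=> /setP/(_ r) + ri; rewrite !inE (negbTE ri) => /negbT; rewrite negbK => /eqP. Qed.

Lemma no_lonely_apart v l i b c : v != l -> v \in free_cols -> l \in free_cols ->
  uniq [:: i; b; c] -> a i v != 0 -> a b v = 0 -> a c v = 0 -> a i l = 0 ->
  a b l != 0 -> a c l != 0 -> False.
Proof.
move=> vl v_free l_free rs_uniq *; apply: not_sparse.
apply: (sparse_of_check (J := [:: v; l]) _ _ rs_uniq cert_lonely_apart).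
- by rewrite /= inE vl.
- by apply/allP; rewrite /= v_free l_free.
- by [].
- match_pattern.
Qed.

Lemma no_lonely_inside v l i b c : v != l -> v \in free_cols -> l \in free_cols ->
  uniq [:: i; b; c] -> a i v != 0 -> a b v = 0 -> a c v = 0 -> a i l != 0 ->
  a b l != 0 -> a c l != 0 -> False.
Proof.
move=> vl v_free l_free rs_uniq *; apply: not_sparse.
apply: (sparse_of_check (J := [:: v; l]) _ _ rs_uniq cert_lonely_inside).
- by rewrite /= inE vl.
- by apply/allP; rewrite /= v_free l_free.
- by [].
- match_pattern.
Qed.

Lemma lonely_col v l i : v \in free_cols -> l \in free_cols -> col_supp v = [set i] ->
  (1 < #|col_supp l|)%N -> i \in col_supp l /\ #|col_supp l| = 2%N.
Proof.
move=> v_free l_free vi l_gt1.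
have vl : v != l by apply: contraTneq l_gt1 => <-; rewrite vi cards1.
have iv : a i v != 0 by move/setP/(_ i): vi; rewrite !inE eqxx.
have zero_v r : r != i -> a r v = 0 by apply: col_supp1_zero.
have [il|il] := boolP (i \in col_supp l); last first.
  case/card_gt1P: l_gt1 => b [c [bl cl bc]].
  have bi : b != i by apply: contraNneq il => <-.
  have ci : c != i by apply: contraNneq il => <-.
  rewrite !inE negbK in bl cl il.
  exfalso; apply: (no_lonely_apart vl v_free l_free _ iv (zero_v _ bi) (zero_v _ ci) (eqP il)
    bl cl).
  by rewrite /= !inE negb_or !(eq_sym i) bi ci bc.
split=> //; apply/eqP; rewrite eqn_leq l_gt1 andbT leqNgt; apply/negP => /card_gt2P.
case=> b [c [d [[bl cl dl] [bc cd db]]]].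
have [b' [c' [bl' cl' bc' bi ci]]] :
    exists b' c', [/\ b' \in col_supp l, c' \in col_supp l, b' != c', b' != i & c' != i].
  have [bi|bi] := eqVneq b i; first by exists c, d; split; rewrite // -bi // eq_sym.
  have [ci|ci] := eqVneq c i; first by exists d, b; split; rewrite // -ci // eq_sym.
  by exists b, c.
rewrite !inE in il bl' cl'.
apply: (no_lonely_inside vl v_free l_free _ iv (zero_v _ bi) (zero_v _ ci) il bl' cl').
by rewrite /= !inE negb_or !(eq_sym i) bi ci bc'.
Qed.

Lemma no_diag3 v1 v2 v3 r1 r2 r3 : uniq [:: v1; v2; v3] ->
  {subset [:: v1; v2; v3] <= free_cols} -> uniq [:: r1; r2; r3] ->
  a r1 v1 != 0 -> a r2 v1 = 0 -> a r3 v1 = 0 -> a r1 v2 = 0 -> a r2 v2 != 0 -> a r3 v2 = 0 ->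
  a r1 v3 = 0 -> a r2 v3 = 0 -> a r3 v3 != 0 -> False.
Proof.
move=> J_uniq J_free rs_uniq *; apply: not_sparse.
apply: (sparse_of_check J_uniq J_free rs_uniq cert_diag3) => //; match_pattern.
Qed.

Lemma col_supp_gt0 v : (0 < #|col_supp v|)%N.
Proof. by have [i iv] := col_cover v; apply/card_gt0P; exists i; rewrite inE. Qed.

Lemma thin_col_zero v r r' : (#|col_supp v| <= 1)%N -> a r v != 0 -> r' != r -> a r' v = 0.
Proof.
move=> v_le1 rv r'r; apply/eqP; apply: contraTT v_le1 => r'v; rewrite -ltnNge.
by apply/card_gt1P; exists r, r'; rewrite !inE rv r'v eq_sym.
Qed.

Lemma exists_wide_free_col : (2 < m)%N -> exists2 l, l \in free_cols & (1 < #|col_supp l|)%N.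
Proof.
move=> m_gt2; apply/exists_inP; apply: contraT => /exists_inPn thin.
have {}thin v : v \in free_cols -> (#|col_supp v| <= 1)%N by move/thin; rewrite -leqNgt.
move: m_gt2; rewrite -[m]card_ord => /card_gt2P[r1 [r2 [r3 [_ [r12 r23 r31]]]]].
have [v1 v1_free r1v1] := row_free r1.
have [v2 v2_free r2v2] := row_free r2.
have [v3 v3_free r3v3] := row_free r3.
have zero v r r' : v \in free_cols -> a r v != 0 -> r' != r -> a r' v = 0.
  by move=> /thin; apply: thin_col_zero.
have v12 : v1 != v2 by apply: contraNneq r2v2 => <-; rewrite (zero _ r1) // eq_sym.
have v23 : v2 != v3 by apply: contraNneq r3v3 => <-; rewrite (zero _ r2) // eq_sym.
have v31 : v3 != v1 by apply: contraNneq r1v1 => <-; rewrite (zero _ r3) // eq_sym.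
have r21 : r2 != r1 by rewrite eq_sym.
have r32 : r3 != r2 by rewrite eq_sym.
have r13 : r1 != r3 by rewrite eq_sym.
exfalso; apply: (no_diag3 _ _ _ r1v1 (zero _ _ _ v1_free r1v1 r21) (zero _ _ _ v1_free r1v1 r31)
  (zero _ _ _ v2_free r2v2 r12) r2v2 (zero _ _ _ v2_free r2v2 r32)
  (zero _ _ _ v3_free r3v3 r13) (zero _ _ _ v3_free r3v3 r23) r3v3).
- by rewrite /= !inE !negb_or v12 (eq_sym v1) v31 v23.
- by apply/allP; rewrite /= v1_free v2_free v3_free.
- by rewrite /= !inE !negb_or r12 (eq_sym r1) r31 r23.
Qed.

Lemma col_supp_setT_of_wide l0 : l0 \in free_cols -> (1 < #|col_supp l0|)%N -> (2 < m)%N ->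
  forall v, v \in free_cols -> col_supp v = setT.
Proof.
move=> l0_free l0_gt1 m_gt2.
have singleton v i : (#|col_supp v| <= 1)%N -> a i v != 0 -> col_supp v = [set i].
  by move=> v_le1 iv; apply/eqP; rewrite eq_sym eqEcard sub1set inE iv cards1 v_le1.
have l0_full : col_supp l0 = setT.
  apply/setP => r; rewrite in_setT; have [w w_free rw] := row_free r.
  have [w_gt1|w_le1] := ltnP 1 #|col_supp w|.
    by rewrite -(col_supp_eq w_free l0_free w_gt1 l0_gt1) inE.
  by case: (lonely_col w_free l0_free (singleton _ _ w_le1 rw) l0_gt1).
move=> v v_free; have [v_gt1|v_le1] := ltnP 1 #|col_supp v|.
  by rewrite (col_supp_eq v_free l0_free).
have [i] := card_gt0P (col_supp_gt0 v); rewrite inE => iv.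
case: (lonely_col v_free l0_free (singleton _ _ v_le1 iv) l0_gt1).
by rewrite l0_full cardsT card_ord => _ m2; move: m_gt2; rewrite [X in (_ < X)%N]m2.
Qed.

Lemma pick_uniq (T : finType) (A : {set T}) n : (n <= #|A|)%N ->
  exists s : seq T, [/\ size s = n, uniq s & {subset s <= A}].
Proof.
move=> n_le; exists (take n (enum A)); split.
- by rewrite size_takel // -cardE.
- by rewrite take_uniq // enum_uniq.
- by move=> x /mem_take; rewrite mem_enum.
Qed.

Lemma no_two_rows_wide v w1 w2 w3 r r' : uniq [:: v; w1; w2; w3] ->
  {subset [:: v; w1; w2; w3] <= free_cols} -> r' != r -> a r' v != 0 -> a r v = 0 ->
  a r w1 != 0 -> a r w2 != 0 -> a r w3 != 0 -> False.
Proof.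
move=> J_uniq J_free r'r *; apply: not_sparse.
apply: (sparse_of_check (rs := [:: r'; r]) J_uniq J_free _ cert_two_rows_wide).
- by rewrite /= inE r'r.
- by [].
- match_pattern.
Qed.

Lemma no_two_rows_narrow u1 u2 u3 u4 w r r' : uniq [:: u1; u2; u3; u4; w] ->
  {subset [:: u1; u2; u3; u4; w] <= free_cols} -> r' != r ->
  a r' u1 != 0 -> a r' u2 != 0 -> a r' u3 != 0 -> a r' u4 != 0 ->
  a r u1 = 0 -> a r u2 = 0 -> a r u3 = 0 -> a r u4 = 0 -> a r w != 0 -> False.
Proof.
move=> J_uniq J_free r'r *; apply: not_sparse.
apply: (sparse_of_check (rs := [:: r'; r]) J_uniq J_free _ cert_two_rows_narrow).
- by rewrite /= inE r'r.
- by [].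
- match_pattern.
Qed.

Lemma free_cols_nz_two_rows : m = 2%N -> forall v r, v \in free_cols -> a r v != 0.
Proof.
move=> m2 v r v_free; apply/negP => /eqP rv.
have [r' r'v] := col_cover v.
have r'r : r' != r by apply: contraNneq r'v => ->; rewrite rv.
have other i : i != r -> i = r'.
  move=> ir; apply/val_inj; move: ir r'r; rewrite -!val_eqE /=.
  by have := ltn_ord i; have := ltn_ord r; have := ltn_ord r'; lia.
pose S := [set w | a r w != 0].
have [S_gt2|S_le2] := ltnP 2 #|free_cols :&: S|.
  case/card_gt2P: S_gt2 => w1 [w2 [w3 [[w1S w2S w3S] [w12 w23 w31]]]].
  have S_mem w : w \in free_cols :&: S -> w \in free_cols /\ a r w != 0.
    by rewrite in_setI [w \in S]inE => /andP.
  case/S_mem: w1S => w1_free rw1; case/S_mem: w2S => w2_free rw2; case/S_mem: w3S => w3_free rw3.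
  have vw w : a r w != 0 -> v != w by move=> rw; apply: contraNneq rw => <-; apply/eqP.
  apply: (no_two_rows_wide _ _ r'r r'v rv rw1 rw2 rw3).
  - by rewrite /= !inE !negb_or !vw // w12 (eq_sym w1) w31 w23.
  - by apply/allP; rewrite /= v_free w1_free w2_free w3_free.
have : (4 <= #|free_cols :\: S|)%N.
  move: (cardsID S free_cols) S_le2 card_free_cols.
  by move: #|_ :&: _| #|_ :\: _| #|free_cols| => nS nU nF; lia.
case/pick_uniq => s [s_size s_uniq s_sub].
case: s s_size s_uniq s_sub => [|u1 [|u2 [|u3 [|u4 [|]]]]] // _ u_uniq u_sub.
have u_zero u : u \in [:: u1; u2; u3; u4] -> a r u = 0.
  by move/u_sub; rewrite in_setD [_ \in S]inE negbK => /andP[/eqP].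
have u_other u : u \in [:: u1; u2; u3; u4] -> a r' u != 0.
  move=> u_in; have [i iu] := col_cover u; suff <- : i = r' by [].
  by apply: other; apply: contraNneq iu => ->; rewrite u_zero.
have u_free u : u \in [:: u1; u2; u3; u4] -> u \in free_cols.
  by move/u_sub; rewrite in_setD => /andP[].
have [w w_free rw] := row_free r.
have w_notin : w \notin [:: u1; u2; u3; u4] by apply: contraNN rw => /u_zero->.
apply: (no_two_rows_narrow _ _ r'r (u_other u1 _) (u_other u2 _) (u_other u3 _) (u_other u4 _)
  (u_zero u1 _) (u_zero u2 _) (u_zero u3 _) (u_zero u4 _) rw); rewrite ?inE ?eqxx ?orbT //.
- by rewrite -[X in uniq X]/(rcons [:: u1; u2; u3; u4] w) rcons_uniq w_notin.
- by apply/allP; rewrite /= w_free !u_free // !inE eqxx ?orbT.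
Qed.

Lemma free_cols_nz v r : v \in free_cols -> a r v != 0.
Proof.
have [m_gt2|] := ltnP 2 m.
  have [l0 l0_free l0_gt1] := exists_wide_free_col m_gt2.
  by move=> v_free; move: (col_supp_setT_of_wide l0_free l0_gt1 m_gt2 v_free) => /setP/(_ r);
    rewrite !inE.
rewrite leq_eqVlt ltnS => /orP[/eqP m2|m_le1]; first exact: free_cols_nz_two_rows.
move=> _; have [i iv] := col_cover v; suff -> : r = i by [].
by apply: ord_inj; have := ltn_ord r; have := ltn_ord i; lia.
Qed.

Definition pm1 (y : int) : bool := (y == 1) || (y == -1).

Lemma pm1_nonzero r j : a r j != 0 -> pm1 (a r j).
Proof. by have := a_unit r j; rewrite /pm1; lia. Qed.

Lemma pm1_sign (b : bool) : pm1 ((~~ b)%:R - b%:R).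
Proof. by case: b. Qed.

Lemma twisted_signs (u v w z su sw : int) : pm1 u -> pm1 v -> pm1 w -> pm1 z -> pm1 su -> pm1 sw ->
  w != u * v * z -> (u * su == w * sw) != (v * su == z * sw).
Proof. by do 6!case/orP=> /eqP->. Qed.

Lemma aligned_rows i r0 v0 l : v0 \in free_cols -> l \in free_cols ->
  a i l = a i v0 * a r0 v0 * a r0 l.
Proof.
move=> v0_free l_free; apply/eqP; apply: contraT => twist.
have sq1 y : pm1 y -> y * y = 1 by case/orP=> /eqP->.
have ir0 : i != r0.
  apply: contra_neq twist => ->; rewrite -mulrA.
  by rewrite mulrA sq1 ?mul1r ?pm1_nonzero ?free_cols_nz.
have v0l : v0 != l.
  apply: contra_neq twist => <-; rewrite -mulrA sq1 ?mulr1 //.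
  by rewrite pm1_nonzero ?free_cols_nz.
exfalso; apply: not_sparse.
apply: (sparse_of_check (J := [:: v0; l]) (rs := [:: i; r0]) _ _ _ cert_twisted).
- by rewrite /= inE v0l.
- by apply/allP; rewrite /= v0_free l_free.
- by rewrite /= inE ir0.
- by [].
have iv0 := free_cols_nz i v0_free; have r0v0 := free_cols_nz r0 v0_free.
have il := free_cols_nz i l_free; have r0l := free_cols_nz r0 l_free.
match_pattern; rewrite /flip_delta.
by apply: twisted_signs; rewrite ?pm1_nonzero ?pm1_sign.
Qed.

Definition priv_offset i : int := (a i (p i) == -1)%:R.

Lemma residual_free i y :
  residual i y = \sum_(j in free_cols) a i j * (y j)%:R - priv_offset i.
Proof.
have priv_part : \sum_(j | j \notin free_cols) a i j * (y j)%:R = a i (p i) * (y (p i))%:R.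
  rewrite (bigD1 (p i)) ?priv_not_free //= big1 ?addr0 // => j /andP[j_priv].
  have [i' <-] : exists i', p i' = j.
    by move: j_priv; rewrite inE negbK => /imsetP[i' _ ->]; exists i'.
  by move=> i'i; rewrite a_priv ?mul0r //; apply: contra_neq i'i => ->.
by rewrite /residual /row_val (bigID (mem free_cols)) /= priv_part /priv_offset; ring.
Qed.

Lemma residual_aligned i r0 v0 y : v0 \in free_cols ->
  residual i y = a i v0 * a r0 v0 * residual r0 y +
                 (a i v0 * a r0 v0 * priv_offset r0 - priv_offset i).
Proof.
move=> v0_free; rewrite !residual_free mulrBr mulr_sumr.
rewrite (eq_bigr (fun j => a i v0 * a r0 v0 * (a r0 j * (y j)%:R))) => [|j j_free]; first by ring.
by rewrite (aligned_rows i r0 v0_free j_free) mulrA.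
Qed.

Lemma hits_shift_le (s c y : int) : pm1 s -> c != 0 -> (hits (s * y + c) * hits y <= 2)%N.
Proof.
move=> _ c0; have [->|y0] := eqVneq y 0.
  by rewrite mulr0 add0r; apply: (@leq_trans (1 * 2)); rewrite ?leq_mul ?hits_le1 ?hits_le2.
by apply: (@leq_trans (2 * 1)); rewrite ?leq_mul ?hits_le1 ?hits_le2.
Qed.

Lemma offsets_aligned i r0 v0 : v0 \in free_cols ->
  priv_offset i = a i v0 * a r0 v0 * priv_offset r0.
Proof.
move=> v0_free; apply/eqP; rewrite eq_sym -subr_eq0; apply: contraT => c0.
have s_pm1 : pm1 (a i v0 * a r0 v0).
  by move: (pm1_nonzero (free_cols_nz i v0_free)) (pm1_nonzero (free_cols_nz r0 v0_free));
    do 2!case/orP=> /eqP->.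
have ir0 : i != r0.
  apply: contraNneq c0 => ->; rewrite subr_eq0 -[X in _ == X]mul1r; apply/eqP; congr (_ * _).
  by move: (pm1_nonzero (free_cols_nz r0 v0_free)); case/orP=> /eqP->.
exfalso; apply: not_sparse.
have rs_uniq : uniq [:: i; r0] by rewrite /= inE ir0.
apply: (sparse_of_local_bound (J := [::]) _ _ (uniq_size_le rs_uniq)
  (fun y => weight_le_prod y rs_uniq)) => // x.
rewrite /= muln1 expn1 (@residual_aligned i r0 v0 x v0_free).
by apply: (@leq_trans (2 * 2)); rewrite // leq_mul2l hits_shift_le.
Qed.

Lemma hits_residual_aligned i r0 v0 y : v0 \in free_cols ->
  hits (residual i y) = hits (residual r0 y).
Proof.
move=> v0_free; rewrite (@residual_aligned i r0 v0 y v0_free).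
rewrite -(@offsets_aligned i r0 v0 v0_free) subrr addr0.
by move: (pm1_nonzero (free_cols_nz i v0_free)) (pm1_nonzero (free_cols_nz r0 v0_free));
  do 2!case/orP=> /eqP->; rewrite ?mulN1r ?mul1r ?opprK ?hitsN.
Qed.

Lemma m_gt0 : (0 < m)%N.
Proof.
have [i _] := col_cover (Ordinal (leq_ltn_trans (leq0n 7) k_ge8)).
exact: leq_ltn_trans (ltn_ord i).
Qed.

Lemma no_parallel q t B : cube_check q 1 (nseq t [:: nonzero]) predT B ->
  (2 * B <= 2 ^ (t + q))%N -> (0 < q <= m)%N -> (t <= #|free_cols|)%N -> False.
Proof.
move=> chk B_le q_range t_le; have /andP[q_gt0 q_le] := q_range.
have [J [J_size J_uniq J_free]] := pick_uniq t_le.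
pose r0 : 'I_m := Ordinal (leq_trans q_gt0 q_le).
have [v0 v0_free _] := row_free r0.
apply: not_sparse; apply: (sparse_of_check_parallel J_uniq J_free q_range
  (fun i y => hits_residual_aligned i r0 y v0_free) chk); first by rewrite J_size.
move=> x; rewrite -J_size; elim: J J_free {J_uniq J_size} => //= j J IH J_free.
rewrite flip_delta_nonzero ?free_cols_nz ?IH //; last by apply: J_free; rewrite mem_head.
by move=> l l_in; apply: J_free; rewrite inE l_in orbT.
Qed.

Lemma card_free_cols_le2 : (#|free_cols| <= 2)%N.
Proof.
rewrite leqNgt; apply/negP => free_gt2.
have := m_gt0; case: (ltnP m 3) => [m_lt3 m_pos|m_ge3 _].
  have [m1|m2] : m = 1%N \/ m = 2%N by lia.
    by apply: (no_parallel cert_parallel1); rewrite ?m1 // card_free_cols m1; lia.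
  by apply: (no_parallel cert_parallel2); rewrite ?m2 // card_free_cols m2; lia.
by apply: (no_parallel cert_parallel3); rewrite ?m_ge3.
Qed.

Lemma row_supp i : [set j | a i j != 0] = p i |: free_cols.
Proof.
apply/setP => j; rewrite in_setU1 inE.
have [j_free|j_priv] := boolP (j \in free_cols); first by rewrite free_cols_nz ?orbT.
have [i' <-] : exists i', p i' = j.
  by move: j_priv; rewrite inE negbK => /imsetP[i' _ ->]; exists i'.
rewrite orbF (inj_eq p_inj); have [->|i'i] := eqVneq i' i.
  by case/orP: (priv_unit i) => /eqP->.
by rewrite a_priv ?eqxx // eq_sym.
Qed.

Lemma card_free_cols_gt0 : (0 < #|free_cols|)%N.
Proof. by have [v v_free _] := row_free (Ordinal m_gt0); apply/card_gt0P; exists v. Qed.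

Theorem star_of_dense :
  star21 [set [set j | a i j != 0] | i : 'I_m] \/ star32 [set [set j | a i j != 0] | i : 'I_m].
Proof.
rewrite (eq_imset _ row_supp).
have := card_free_cols_le2; have := card_free_cols_gt0.
case C_card: #|free_cols| => [|[|[|n]]] // _ _.
- by left; apply: star21_center.
- by right; apply: star32_center.
Qed.

End PrivateColumns.

(** * Real matrices *)

Lemma private_cols m k (a : 'I_m -> 'I_k -> int) :
  (forall i, ~~ ([set j | a i j != 0] \subset \bigcup_(i' | i' != i) [set j | a i' j != 0])) ->
  exists2 p : 'I_m -> 'I_k, forall i, a i (p i) != 0 & forall i i', i' != i -> a i' (p i) = 0.
Proof.
move=> own; apply: (@fin_all_exists2 _ _ (fun i v => a i v != 0)
  (fun i v => forall i', i' != i -> a i' v = 0)) => i.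
have /subsetPn[v] := own i; rewrite inE => iv v_notin.
exists v => // i' i'i; apply/eqP; apply: contraNT v_notin => i'v.
by apply/bigcupP; exists i'; rewrite ?inE.
Qed.

Lemma unit_gap (R : realType) (y d s : R) : (s == 1) || (s == -1) -> (y == 0) || (y == 1) ->
  (y + d * s == 0) || (y + d * s == 1) -> (d == 0) || (d == 1) || (d == -1).
Proof.
move=> /orP[]/eqP-> /orP[]/eqP-> /orP[]/eqP; rewrite ?mulr1 ?mulrN1 => yd;
  first [have -> : d = 0 by lra | have -> : d = 1 by lra | have -> : d = -1 by lra];
  by rewrite eqxx ?orbT.
Qed.

Section RealMatrix.
Variables (R : realType) (m k : nat) (A : 'M[R]_(m, k)).
Local Notation cube := {ffun 'I_k -> bool}.

Definition cube_set : {set cube} := [set b | in_cube (A *m hvec R b)].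

Lemma mulmx_hvecE b i : (A *m hvec R b) i 0 = \sum_j A i j * (b j)%:R.
Proof. by rewrite mxE; apply: eq_bigr => j _; rewrite mxE. Qed.

Lemma mulmx_hvec_flip b i j :
  (A *m hvec R (flip j b)) i 0 = (A *m hvec R b) i 0 + A i j * ((~~ b j)%:R - (b j)%:R).
Proof.
rewrite !mulmx_hvecE (bigD1 j) //= [in RHS](bigD1 j) //= flip_id.
rewrite (eq_bigr (fun v => A i v * (b v)%:R)) => [|v /flip_neq->//].
by rewrite mulrBr; ring.
Qed.

Hypothesis dense : (2 ^ k < 2 * tL A)%N.

Lemma flip_pair j : exists2 b, b \in cube_set & flip j b \in cube_set.
Proof.
have flip_card : #|flip j @: cube_set| = #|cube_set| by apply/card_imset/inv_inj/flipK.
have U_le : (#|cube_set :|: flip j @: cube_set| <= 2 ^ k)%N.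
  by rewrite -(card_cube k); apply: max_card.
have : (0 < #|cube_set :&: flip j @: cube_set|)%N.
  move: (cardsUI cube_set (flip j @: cube_set)) dense U_le; rewrite flip_card /tL -/cube_set.
  by move: #|_ :|: _| #|_ :&: _| #|cube_set| (2 ^ k)%N => nU nI nS nK; lia.
case/card_gt0P => b'; rewrite inE => /andP[b'_in /imsetP[b b_in b'b]].
by exists b; rewrite // -b'b.
Qed.

Lemma entry_unit i j : (A i j == 0) || (A i j == 1) || (A i j == -1).
Proof.
have [b b_in fb_in] := flip_pair j.
move: b_in fb_in; rewrite !inE => /forallP/(_ i) y01 /forallP/(_ i).
rewrite mulmx_hvec_flip; apply: unit_gap y01.
by case: (b j); rewrite /= ?subr0 ?sub0r eqxx ?orbT.
Qed.

Definition intA i j : int := if A i j == 0 then 0 else if A i j == 1 then 1 else -1.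

Lemma intA_unit i j : (`|intA i j| <= 1)%N.
Proof. by rewrite /intA; case: ifP => _ //; case: ifP. Qed.

Lemma intAE i j : A i j = (intA i j)%:~R.
Proof.
rewrite /intA; case/orP: (entry_unit i j) => [/orP[]|] /eqP->; rewrite ?eqxx ?oner_eq0 //.
by rewrite oppr_eq0 oner_eq0 ifN //; apply/eqP; lra.
Qed.

Lemma mulmx_hvec_int b i : (A *m hvec R b) i 0 = (row_val intA i b)%:~R.
Proof.
rewrite mulmx_hvecE /row_val rmorph_sum; apply: eq_bigr => j _.
by rewrite intAE rmorphM /=; case: (b j).
Qed.

Lemma tL_good_set : tL A = #|good_set intA|.
Proof.
apply: eq_card => b; rewrite !inE; apply: eq_forallb => i.
by rewrite mulmx_hvec_int /good /is01 intr_eq0 -(eqr_int R _ 1).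
Qed.

Lemma suppL_row i : suppL (coordL A i) = [set j | intA i j != 0].
Proof.
apply/setP => j; rewrite !inE -(intr_eq0 R) -intAE; congr negb.
apply/eqP/eqP => [/matrixP/(_ 0 0)|Aij]; first by rewrite !mxE.
by apply/matrixP => x y; rewrite !mxE.
Qed.

Lemma col_cover_of_suppL : #|suppL A| = k -> forall j, exists i, intA i j != 0.
Proof.
move=> suppA j; have : j \in suppL A.
  suff -> : suppL A = setT by rewrite in_setT.
  by apply/eqP; rewrite eqEcard subsetT /= cardsT card_ord; apply: eq_leq; rewrite suppA.
rewrite inE => /eqP colA; apply/existsP; apply: contra_notT colA => /existsPn A0.
by apply/matrixP => x y; rewrite !mxE intAE; move/negbNE/eqP: (A0 x) => ->.
Qed.

Lemma minimal_private : minimal A ->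
  exists2 p : 'I_m -> 'I_k, forall i, intA i (p i) != 0 & forall i i', i' != i -> intA i' (p i) = 0.
Proof.
move=> Amin; apply: private_cols => i; have [own _] := Amin i.
by rewrite suppL_row (eq_bigr _ (fun i' _ => suppL_row i')) in own.
Qed.

End RealMatrix.

Theorem lemma3p5 (R : realType) (m k : nat) (A : 'M[R]_(m, k)) :
  minimal A ->
  (forall i : 'I_m, 1 < #|suppL (coordL A i)|)%N ->
  #|suppL A| = k ->
  (8 <= k)%N ->
  (2 ^ k.-1 < tL A)%N ->
  star21 (shapeL A) \/ star32 (shapeL A).
Proof.
move=> Amin row_supp_gt1 suppA k_ge8 t_gt.
have dense : (2 ^ k < 2 * tL A)%N.
  by rewrite -[k in (2 ^ k)%N]prednK ?expnS ?ltn_pmul2l //; apply: leq_trans k_ge8.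
have [p p_nz p_zero] := minimal_private dense Amin.
rewrite /shapeL (eq_imset _ (suppL_row dense)).
apply: (star_of_dense (intA_unit A) p_zero p_nz (col_cover_of_suppL dense suppA)) => //.
- by move=> i; rewrite -suppL_row.
- by rewrite -tL_good_set.
Qed.
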